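(* Let $A$ be an algebra with a differential calculus $(\Omega^1_A,\mathrm{d})$ and a Riemannian structure $(g,(\nabla,\sigma))$, let $I\subset A$ be a two-sided ideal such that $B=A/I$ is a (metrically co-orientable) noncommutative hypersurface with normalized central $1$-form $\nu\in\Omega^1_A$, and let $\Pi:q_!(\Omega^1_A)\to q_!(\Omega^1_A)$, $[\omega]\mapsto[\omega-g^{-1}(\omega\otimes_A\nu)\,\nu]$. Then: (i) $\Pi([\nu])=0$; (ii) $\Pi^2=\Pi$; (iii) $\Pi$ induces a well-defined $B$-bimodule map $\Pi:\Omega^1_B\to q_!(\Omega^1_A)$ which is a section of the quotient map $q_!(\Omega^1_A)\twoheadrightarrow\Omega^1_B$; in particular it defines an isomorphism $\Omega^1_B\cong\Pi\,q_!(\Omega^1_A)$.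
   Context: All algebras are associative unital over $\mathbb{C}$. A differential calculus on $A$ is a pair $(\Omega^1_A,\mathrm{d})$, $\Omega^1_A$ an $A$-bimodule, $\mathrm{d}:A\to\Omega^1_A$ linear, satisfying the Leibniz rule and $\Omega^1_A=A\,\mathrm{d}(A)$. A (generalized) metric is an $A$-bimodule map $g:A\to\Omega^1_A\otimes_A\Omega^1_A$, $g(1)=\sum_\alpha g^\alpha\otimes_Ag_\alpha$, with an $A$-bimodule map $g^{-1}:\Omega^1_A\otimes_A\Omega^1_A\to A$ satisfying $\sum_\alpha g^{-1}(\omega\otimes_Ag^\alpha)g_\alpha=\omega=\sum_\alpha g^\alpha g^{-1}(g_\alpha\otimes_A\omega)$; a Riemannian structure is such a metric together with a bimodule connection $(\nabla,\sigma)$ on $\Omega^1_A$ satisfying $g^{-1}\circ\sigma=g^{-1}$ and metric compatibility (only $g^{-1}$ is used here). Let $B=A/I$ with quotient map $q$ and classes $[\cdot]$. For an $A$-bimodule $V$, $q_!(V):=B\otimes_AV\otimes_AB\cong V/(IV+VI)$, where $IV$ (resp. $VI$) is the set of elements $av$ (resp. $va$) with $a\in I$, $v\in V$. Let $N^1_B:=B[\mathrm{d}I]B\subseteq q_!(\Omega^1_A)$ be the $B$-subbimodule generated by the classes $[\mathrm{d}a]$, $a\in I$, and $\Omega^1_B:=q_!(\Omega^1_A)/N^1_B$ with $\mathrm{d}_B[a]=[\mathrm{d}a]$; this is a differential calculus on $B$. $B$ is called a (metrically co-orientable) noncommutative hypersurface if $N^1_B$ admits a one-element basis $[\nu]$ (it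 is free of rank one generated by $[\nu]$) with $\nu\in\Omega^1_A$ central ($a\nu=\nu a$ for all $a\in A$) and $[g^{-1}(\nu\otimes_A\nu)]=1\in B$. The map $\omega\mapsto\omega-g^{-1}(\omega\otimes_A\nu)\nu$ is an $A$-bimodule endomorphism of $\Omega^1_A$ and induces the $B$-bimodule endomorphism $\Pi$ of $q_!(\Omega^1_A)$. *)

From HB Require Import structures.
From mathcomp Require Import all_boot all_order all_algebra.
From mathcomp Require Import reals complex.
Set Implicit Arguments. Unset Strict Implicit. Unset Printing Implicit Defensive.
Import Order.TTheory GRing.Theory Num.Theory.
Local Open Scope ring_scope.

Section Defs.
Variable C : fieldType.
Variable A : algType C.

Definition bimodule (M : zmodType) (la : A -> M -> M) (ra : M -> A -> M) : Prop :=
  [/\ (forall a m n, la a (m + n) = la a m + la a n),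
      (forall a b m, la (a + b) m = la a m + la b m),
      (forall m, la 1 m = m)
    & (forall a b m, la (a * b) m = la a (la b m))] /\
  [/\ (forall a m n, ra (m + n) a = ra m a + ra n a),
      (forall a b m, ra m (a + b) = ra m a + ra m b),
      (forall m, ra m 1 = m)
    & (forall a b m, ra m (a * b) = ra (ra m a) b)] /\
  (forall a b m, la a (ra m b) = ra (la a m) b) /\
  (forall (c : C) m, la c%:A m = ra m c%:A).

Definition bimodule_map (M N : zmodType) (la : A -> M -> M) (ra : M -> A -> M)
    (la' : A -> N -> N) (ra' : N -> A -> N) (f : M -> N) : Prop :=
  [/\ (forall m n, f (m + n) = f m + f n),
      (forall a m, f (la a m) = la' a (f m))
    & (forall a m, f (ra m a) = ra' (f m) a)].

Definition lmulA (a x : A) : A := a * x.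
Definition rmulA (x a : A) : A := x * a.

Definition balanced (M N W : zmodType) (raM : M -> A -> M) (laN : A -> N -> N)
    (f : M -> N -> W) : Prop :=
  [/\ (forall m1 m2 n, f (m1 + m2) n = f m1 n + f m2 n),
      (forall m n1 n2, f m (n1 + n2) = f m n1 + f m n2)
    & (forall m a n, f (raM m a) n = f m (laN a n))].

Definition is_tensor (M N T : zmodType)
    (laM : A -> M -> M) (raM : M -> A -> M) (laN : A -> N -> N) (raN : N -> A -> N)
    (laT : A -> T -> T) (raT : T -> A -> T) (tens : M -> N -> T) : Prop :=
  bimodule laT raT /\
  [/\ balanced raM laN tens,
      (forall a m n, tens (laM a m) n = laT a (tens m n)),
      (forall m n a, tens m (raN n a) = raT (tens m n) a),
      (forall t : T, exists s : seq (M * N), t = \sum_(p <- s) tens p.1 p.2)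
    & (forall (W : zmodType) (f : M -> N -> W), balanced raM laN f ->
        exists F : T -> W, (forall x y, F (x + y) = F x + F y) /\
                           (forall m n, F (tens m n) = f m n))].

Definition differential_calculus (Om : zmodType) (la : A -> Om -> Om)
    (ra : Om -> A -> Om) (d : A -> Om) : Prop :=
  [/\ bimodule la ra,
      (forall a b, d (a + b) = d a + d b),
      (forall (c : C) a, d (c *: a) = la c%:A (d a)),
      (forall a b, d (a * b) = ra (d a) b + la a (d b))
    & (forall w, exists s : seq (A * A), w = \sum_(p <- s) la p.1 (d p.2))].

Section Riem.
Variables (Om T T3 : zmodType).
Variables (la : A -> Om -> Om) (ra : Om -> A -> Om) (d : A -> Om).
Variables (laT : A -> T -> T) (raT : T -> A -> T) (tens : Om -> Om -> T).
Variable (tens3 : T -> Om -> T3).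

Definition generalized_metric (g : A -> T) (ginv : T -> A) : Prop :=
  [/\ bimodule_map lmulA rmulA laT raT g,
      bimodule_map laT raT lmulA rmulA ginv
    & exists gs : seq (Om * Om),
        [/\ g 1 = \sum_(p <- gs) tens p.1 p.2,
            (forall w, \sum_(p <- gs) la (ginv (tens w p.1)) p.2 = w)
          & (forall w, \sum_(p <- gs) ra p.1 (ginv (tens p.2 w)) = w)]].

Definition bimodule_connection (nabla : Om -> T) (sigma : T -> T) : Prop :=
  [/\ (forall v w, nabla (v + w) = nabla v + nabla w),
      (forall a w, nabla (la a w) = tens (d a) w + laT a (nabla w)),
      bimodule_map laT raT laT raT sigma
    & (forall a w, nabla (ra w a) = raT (nabla w) a + sigma (tens w (d a)))].

(* Riemannian structure: metric + bimodule connection with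
   g^{-1} o sigma = g^{-1} and metric compatibility nabla g = 0, i.e.
   (nabla (x) id + (sigma (x) id)(id (x) nabla)) g(1) = 0 in
   T3 = (Om (x)_A Om) (x)_A Om.  Each entry of gs is ((g^a, g_a), a
   decomposition of nabla g_a into simple tensors). *)
Definition riemannian_structure (g : A -> T) (ginv : T -> A)
    (nabla : Om -> T) (sigma : T -> T) : Prop :=
  [/\ generalized_metric g ginv,
      bimodule_connection nabla sigma,
      (forall t, ginv (sigma t) = ginv t)
    & exists gs : seq (Om * Om * seq (Om * Om)),
        [/\ g 1 = \sum_(p <- gs) tens p.1.1 p.1.2,
            (forall p, p \in gs -> nabla p.1.2 = \sum_(q <- p.2) tens q.1 q.2)
          & \sum_(p <- gs) tens3 (nabla p.1.1) p.1.2
            + \sum_(p <- gs) \sum_(q <- p.2) tens3 (sigma (tens p.1.1 q.1)) q.2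
            = 0]].
End Riem.

Definition two_sided_ideal (I : pred A) : Prop :=
  [/\ I 0, (forall x y, I x -> I y -> I (x - y)),
      (forall a x, I x -> I (a * x)) & (forall a x, I x -> I (x * a))].

Section Quot.
Variables (Om T : zmodType) (la : A -> Om -> Om) (ra : Om -> A -> Om) (d : A -> Om).
Variable (I : pred A).

(* qker w  <->  [w] = 0 in q_!(Om) = Om / (I Om + Om I)   (sub-bimodule
   generated by the a w, w a with a in I). *)
Definition qker (w : Om) : Prop :=
  exists (s1 : seq (A * Om)) (s2 : seq (Om * A)),
    [/\ all (fun p => I p.1) s1, all (fun p => I p.2) s2
      & w = \sum_(p <- s1) la p.1 p.2 + \sum_(p <- s2) ra p.1 p.2].

(* nker w  <->  [w] lies in N^1_B = B [d I] B, i.e. [w] = 0 in Omega^1_B. *)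
Definition nker (w : Om) : Prop :=
  exists (s : seq (A * A * A)) (k : Om),
    [/\ all (fun p => I p.1.2) s, qker k
      & w = \sum_(p <- s) ra (la p.1.1 (d p.1.2)) p.2 + k].

(* B = A/I is a metrically co-orientable noncommutative hypersurface with
   normalised central 1-form nu: nu central, [g^{-1}(nu (x) nu)] = 1 in B,
   and [nu] is a one-element basis of N^1_B. *)
Definition nc_hypersurface (tens : Om -> Om -> T) (ginv : T -> A) (nu : Om) : Prop :=
  [/\ (forall a, la a nu = ra nu a),
      I (ginv (tens nu nu) - 1),
      nker nu,
      (forall w, nker w -> exists b : A, qker (w - la b nu))
    & (forall b : A, qker (la b nu) -> I b)].
End Quot.

End Defs.

From HB Require Import structures.
From mathcomp Require Import all_boot all_order all_algebra.
From mathcomp Require Import reals complex.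
Import Order.TTheory GRing.Theory Num.Theory.
Local Open Scope ring_scope.

(* Contracting with the normal form, h w := g^{-1}(w (x) nu), is an
   A-bimodule map Om -> A because nu is central; hence h maps I Om + Om I
   into I, and Pi w = w - h(w) nu is a bimodule map preserving that
   subbimodule.  Since h(nu) = 1 mod I, Pi kills [b nu], and Pi is
   idempotent mod I.  As N^1_B is spanned by [nu], Pi kills N^1_B, while
   w - Pi w = h(w) nu always lies in N^1_B: so Pi is a section of
   q_!(Om) ->> Omega^1_B, and [Pi w] = 0 iff w lies in N^1_B. *)

Section AdditiveMaps.
Context {U V : zmodType} {f : U -> V}.
Hypothesis fD : forall x y, f (x + y) = f x + f y.

Lemma addf0 : f 0 = 0.
Proof. by apply: (addrI (f 0)); rewrite -fD !addr0. Qed.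

Lemma addfN x : f (- x) = - f x.
Proof. by apply: (addrI (f x)); rewrite -fD !subrr addf0. Qed.

Lemma addfB x y : f (x - y) = f x - f y.
Proof. by rewrite fD addfN. Qed.

Lemma addf_sum (J : Type) (s : seq J) (F : J -> U) :
  f (\sum_(j <- s) F j) = \sum_(j <- s) f (F j).
Proof. exact: (big_morph f fD addf0). Qed.

End AdditiveMaps.

Section TwoSidedIdeal.
Context {C : fieldType} {A : algType C} {I : pred A}.
Hypothesis I_ideal : two_sided_ideal I.

Lemma ideal0 : I 0.
Proof. by case: I_ideal. Qed.

Lemma idealB x y : I x -> I y -> I (x - y).
Proof. by case: I_ideal => _ IB _ _; apply: IB. Qed.

Lemma idealN x : I x -> I (- x).
Proof. by move=> Ix; rewrite -sub0r; apply: idealB => //; apply: ideal0. Qed.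

Lemma idealD x y : I x -> I y -> I (x + y).
Proof. by move=> Ix Iy; rewrite -(opprK y); apply/idealB/idealN. Qed.

Lemma idealMl a x : I x -> I (a * x).
Proof. by case: I_ideal => _ _ IMl _; apply: IMl. Qed.

Lemma idealMr a x : I x -> I (x * a).
Proof. by case: I_ideal => _ _ _ IMr; apply: IMr. Qed.

Lemma ideal_sum (J : eqType) (s : seq J) (F : J -> A) :
  {in s, forall j, I (F j)} -> I (\sum_(j <- s) F j).
Proof.
move=> IF; rewrite big_seq.
by apply: (big_ind I); [apply: ideal0 | apply: idealD | apply: IF].
Qed.

End TwoSidedIdeal.

Section QuotientBimodule.
Context {C : fieldType} {A : algType C} {Om : zmodType}.
Context {la : A -> Om -> Om} {ra : Om -> A -> Om} {d : A -> Om} {I : pred A}.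
Hypothesis Om_bimodule : bimodule la ra.
Hypothesis I_ideal : two_sided_ideal I.

Let laD a m n : la a (m + n) = la a m + la a n.
Proof. by case: Om_bimodule => -[]. Qed.

Let laDl a b m : la (a + b) m = la a m + la b m.
Proof. by case: Om_bimodule => -[]. Qed.

Let laM a b m : la (a * b) m = la a (la b m).
Proof. by case: Om_bimodule => -[]. Qed.

Let raD a m n : ra (m + n) a = ra m a + ra n a.
Proof. by case: Om_bimodule => _ [[]]. Qed.

Let raDr a b m : ra m (a + b) = ra m a + ra m b.
Proof. by case: Om_bimodule => _ [[]]. Qed.

Let la_ra a b m : la a (ra m b) = ra (la a m) b.
Proof. by case: Om_bimodule => _ [_ []]. Qed.

Lemma la_oppl a m : la (- a) m = - la a m.
Proof. exact: (addfN (fun a b => laDl a b m)). Qed.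

Lemma la_subl a b m : la (a - b) m = la a m - la b m.
Proof. exact: (addfB (fun a b => laDl a b m)). Qed.

Lemma ra_oppr a m : ra m (- a) = - ra m a.
Proof. exact: (addfN (fun a b => raDr a b m)). Qed.

Lemma la_sub a m n : la a (m - n) = la a m - la a n.
Proof. exact: (addfB (laD a)). Qed.

Lemma ra_sub a m n : ra (m - n) a = ra m a - ra n a.
Proof. exact: (addfB (raD a)). Qed.

Lemma qker0 : qker la ra I 0.
Proof. by exists [::], [::]; rewrite !big_nil addr0. Qed.

Lemma qkerD u v : qker la ra I u -> qker la ra I v -> qker la ra I (u + v).
Proof.
case=> [s1 [s2 [Is1 Is2 ->]]] [t1 [t2 [It1 It2 ->]]].
exists (s1 ++ t1), (s2 ++ t2); rewrite !all_cat Is1 Is2 It1 It2.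
by split=> //; rewrite !big_cat addrACA.
Qed.

Lemma qkerN u : qker la ra I u -> qker la ra I (- u).
Proof.
case=> [s1 [s2 [Is1 Is2 ->]]].
exists [seq (- p.1, p.2) | p <- s1], [seq (p.1, - p.2) | p <- s2]; split.
- by rewrite all_map; apply/allP => p /(allP Is1); apply: (idealN I_ideal).
- by rewrite all_map; apply/allP => p /(allP Is2); apply: (idealN I_ideal).
rewrite !big_map opprD -!sumrN.
by congr (_ + _); apply: eq_bigr => p _; rewrite ?la_oppl ?ra_oppr.
Qed.

Lemma qker_la_ideal c m : I c -> qker la ra I (la c m).
Proof.
by move=> Ic; exists [:: (c, m)], [::]; rewrite /= Ic big_seq1 big_nil addr0.
Qed.

Lemma qker_la a u : qker la ra I u -> qker la ra I (la a u).
Proof.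
case=> [s1 [s2 [Is1 Is2 ->]]].
exists [seq (a * p.1, p.2) | p <- s1], [seq (la a p.1, p.2) | p <- s2]; split.
- by rewrite all_map; apply/allP => p /(allP Is1); apply: (idealMl I_ideal).
- by rewrite all_map.
rewrite laD !(addf_sum (laD a)) !big_map.
by congr (_ + _); apply: eq_bigr => p _; rewrite ?laM ?la_ra.
Qed.

Lemma bimodule_map_qker (h : Om -> A) k :
  bimodule_map la ra (@lmulA _ A) (@rmulA _ A) h -> qker la ra I k -> I (h k).
Proof.
case=> hD hla hra [s1 [s2 [Is1 Is2 ->]]].
rewrite hD !(addf_sum hD).
apply: (idealD I_ideal); apply: (ideal_sum I_ideal) => p ps.
  by rewrite hla; apply: (idealMr I_ideal); apply: (allP Is1).
by rewrite hra; apply: (idealMl I_ideal); apply: (allP Is2).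
Qed.

Lemma qker_nker k : qker la ra I k -> nker la ra d I k.
Proof. by exists [::], k; rewrite big_nil add0r. Qed.

Lemma nkerD u v :
  nker la ra d I u -> nker la ra d I v -> nker la ra d I (u + v).
Proof.
case=> [s [k [Is qk ->]]] [t [k' [It qk' ->]]].
exists (s ++ t), (k + k'); rewrite all_cat Is It.
by split; [| apply: qkerD | rewrite big_cat addrACA].
Qed.

Lemma nker_la a u : nker la ra d I u -> nker la ra d I (la a u).
Proof.
case=> [s [k [Is qk ->]]].
exists [seq (a * p.1.1, p.1.2, p.2) | p <- s], (la a k).
split; [by rewrite all_map | exact: qker_la |].
rewrite laD (addf_sum (laD a)) big_map.
by congr (_ + _); apply: eq_bigr => p _ /=; rewrite la_ra laM.
Qed.

Section TangentProjection.
Context {h : Om -> A} {nu : Om}.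
Hypothesis nu_central : forall a, la a nu = ra nu a.
Hypothesis h_bimodule_map : bimodule_map la ra (@lmulA _ A) (@rmulA _ A) h.
Hypothesis h_nu : I (h nu - 1).
Hypothesis nker_nu : nker la ra d I nu.
Hypothesis nker_nu_span :
  forall w, nker la ra d I w -> exists b, qker la ra I (w - la b nu).

Lemma contraction_bimodule_map {T : zmodType} {laT : A -> T -> T}
    {raT : T -> A -> T} {tens : Om -> Om -> T} {ginv : T -> A} :
  is_tensor la ra la ra laT raT tens ->
  bimodule_map laT raT (@lmulA _ A) (@rmulA _ A) ginv ->
  bimodule_map la ra (@lmulA _ A) (@rmulA _ A) (fun w => ginv (tens w nu)).
Proof.
move=> [_ [[tensDl _ tens_bal] tens_la tens_ra _ _]] [ginvD ginv_la ginv_ra].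
split=> [v w | a w | a w]; first by rewrite tensDl ginvD.
  by rewrite tens_la ginv_la.
by rewrite tens_bal nu_central tens_ra ginv_ra.
Qed.

Definition tangent_proj (w : Om) : Om := w - la (h w) nu.

Let hD v w : h (v + w) = h v + h w.
Proof. by case: h_bimodule_map. Qed.

Let h_la a w : h (la a w) = a * h w.
Proof. by case: h_bimodule_map. Qed.

Let h_ra a w : h (ra w a) = h w * a.
Proof. by case: h_bimodule_map. Qed.

Lemma tangent_projD v w :
  tangent_proj (v + w) = tangent_proj v + tangent_proj w.
Proof. by rewrite /tangent_proj hD laDl opprD addrACA. Qed.

Lemma tangent_proj_bimodule a b w :
  tangent_proj (ra (la a w) b) = ra (la a (tangent_proj w)) b.
Proof.
rewrite /tangent_proj h_ra h_la la_sub ra_sub; congr (_ - _).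
by rewrite !laM (nu_central b) !la_ra.
Qed.

Lemma qker_tangent_proj k : qker la ra I k -> qker la ra I (tangent_proj k).
Proof.
move=> qk; apply: qkerD => //; apply: qkerN; apply: qker_la_ideal.
exact: bimodule_map_qker h_bimodule_map qk.
Qed.

Lemma qker_tangent_proj_nu b : qker la ra I (tangent_proj (la b nu)).
Proof.
rewrite /tangent_proj h_la.
have -> : la b nu - la (b * h nu) nu = - la (b * (h nu - 1)) nu.
  by rewrite mulrBr mulr1 la_subl opprB.
by apply/qkerN/qker_la_ideal/(idealMl I_ideal).
Qed.

Lemma tangent_proj_idem w :
  qker la ra I (tangent_proj (tangent_proj w) - tangent_proj w).
Proof.
rewrite {1}/tangent_proj addrAC subrr add0r; apply/qkerN/qker_la_ideal.
rewrite /tangent_proj (addfB hD) h_la.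
have -> : h w - h w * h nu = - (h w * (h nu - 1)) by rewrite mulrBr mulr1 opprB.
exact/(idealN I_ideal)/(idealMl I_ideal).
Qed.

Lemma nker_tangent_proj_sub w : nker la ra d I (tangent_proj w - w).
Proof.
by rewrite /tangent_proj addrAC subrr add0r -la_oppl; apply: nker_la.
Qed.

Lemma qker_tangent_proj_nker w :
  nker la ra d I w -> qker la ra I (tangent_proj w).
Proof.
move=> /nker_nu_span [b qb]; rewrite -(subrK (la b nu) w) tangent_projD.
by apply: qkerD; [apply: qker_tangent_proj | apply: qker_tangent_proj_nu].
Qed.

Lemma qker_tangent_projE w :
  qker la ra I (tangent_proj w) <-> nker la ra d I w.
Proof.
split=> [qPw|]; last exact: qker_tangent_proj_nker.
rewrite -[w](subrK (la (h w) nu)).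
by apply: nkerD; [apply: qker_nker | apply: nker_la].
Qed.

End TangentProjection.
End QuotientBimodule.

Theorem proposition3p5 (R : realType) (A : algType R[i])
    (Om : zmodType) (la : A -> Om -> Om) (ra : Om -> A -> Om) (d : A -> Om)
    (T : zmodType) (laT : A -> T -> T) (raT : T -> A -> T) (tens : Om -> Om -> T)
    (T3 : zmodType) (la3 : A -> T3 -> T3) (ra3 : T3 -> A -> T3) (tens3 : T -> Om -> T3)
    (g : A -> T) (ginv : T -> A) (nabla : Om -> T) (sigma : T -> T)
    (I : pred A) (nu : Om) :
  differential_calculus la ra d ->
  is_tensor la ra la ra laT raT tens ->
  is_tensor laT raT la ra la3 ra3 tens3 ->
  riemannian_structure la ra d laT raT tens tens3 g ginv nabla sigma ->
  two_sided_ideal I ->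
  nc_hypersurface la ra d I tens ginv nu ->
  let Pi := fun w : Om => w - la (ginv (tens w nu)) nu in
  [/\ (* (i) Pi [nu] = 0 *)
      qker la ra I (Pi nu),
      (* (ii) Pi^2 = Pi on q_!(Om) *)
      (forall w, qker la ra I (Pi (Pi w) - Pi w)),
      (* (iii) Pi is a B-bimodule map on q_!(Om), and it is well defined on
         Omega^1_B = q_!(Om)/N^1_B, i.e. kills N^1_B *)
      (forall w1 w2, qker la ra I (Pi (w1 + w2) - (Pi w1 + Pi w2))) /\
      (forall a b w, qker la ra I (Pi (ra (la a w) b) - ra (la a (Pi w)) b)) /\
      (forall w, nker la ra d I w -> qker la ra I (Pi w)),
      (* it is a section of q_!(Om) ->> Omega^1_B *)
      (forall w, nker la ra d I (Pi w - w))
    & (* hence Omega^1_B ~= Pi q_!(Om): [w]_B |-> [Pi w] is injective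
         (its image is Pi q_!(Om) by definition) *)
      (forall w, qker la ra I (Pi w) <-> nker la ra d I w)].
Proof.
move=> [Om_bimod _ _ _ _] Om_tensor _ [[_ ginv_map _] _ _ _] I_ideal.
move=> [nu_central h_nu nker_nu nker_nu_span _] Pi.
have h_map := contraction_bimodule_map nu_central Om_tensor ginv_map.
have la1 : la 1 nu = nu by case: Om_bimod => -[].
have -> : Pi = tangent_proj (la:=la) (h:=fun w => ginv (tens w nu)) (nu:=nu).
  by [].
split.
- by have := qker_tangent_proj_nu Om_bimod I_ideal h_map h_nu 1; rewrite la1.
- exact: tangent_proj_idem.
- split=> [w1 w2|].
    by rewrite (tangent_projD Om_bimod h_map) subrr; apply: qker0.
  split=> [a b w|]; last exact: qker_tangent_proj_nker.
  rewrite (tangent_proj_bimodule Om_bimod nu_central h_map) subrr.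
  exact: qker0.
- exact: nker_tangent_proj_sub.
- exact: qker_tangent_projE.
Qed.
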